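(* Fix $\eta\in\mathcal H_Q$ and an object $(W,\{\alpha_{i,\hbar}(z)\}_{i\in I},\{e^\pm_{i,\hbar}(z)\}_{i\in I})$ of $\mathcal A_\hbar^\eta(Q)$. Let $\varphi(\cdot,z):\mathfrak h\to\mathcal E_\hbar(W)$ be the unique linear map with $\varphi(\alpha_i,z)+\Phi(\eta'(\alpha_i,z),\varphi)=\alpha_{i,\hbar}(z)$ for all $i\in I$. Then for all $i,j\in I$: $$[\varphi(\alpha_i,z_1),\alpha_{j,\hbar}(z_2)]=\langle\alpha_i,\alpha_j\rangle\tfrac{\partial}{\partial z_2}z_1^{-1}\delta\big(\tfrac{z_2}{z_1}\big)+\langle\eta''(\alpha_j,z_2-z_1),\alpha_i\rangle,$$ $$[\varphi(\alpha_i,z_1),e^\pm_{j,\hbar}(z_2)]=\pm\langle\alpha_i,\alpha_j\rangle e^\pm_{j,\hbar}(z_2)z_1^{-1}\delta\big(\tfrac{z_2}{z_1}\big)\pm\langle\eta'(\alpha_j,z_2-z_1),\alpha_i\rangle e^\pm_{j,\hbar}(z_2),$$ $$[\varphi(\alpha_i,z_1),\varphi(\alpha_j,z_2)]=\langle\alpha_i,\alpha_j\rangle\tfrac{\partial}{\partial z_2}z_1^{-1}\delta\big(\tfrac{z_2}{z_1}\big).$$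
   Context: $\hbar$-adic setting: a $\mathbb{C}[[\hbar]]$-module is topologically free if it equals $W_0[[\hbar]]$; for such $W$, $\mathcal E_\hbar(W)=\mathrm{Hom}_{\mathbb C[[\hbar]]}(W,W_0((z))[[\hbar]])$. $Q=\bigoplus_{i\in I}\mathbb Z\alpha_i$ ($I$ finite) is a non-degenerate even lattice, $\mathfrak h=\mathbb C\otimes_{\mathbb Z}Q$ with form $\langle\cdot,\cdot\rangle$. $\mathcal H_Q$ is the set of linear maps $\eta:\mathfrak h\to\mathfrak h\otimes\mathbb C((z))[[\hbar]]$ with $\eta(\alpha_i,z)|_{\hbar=0}\in\mathfrak h\otimes z\mathbb C[[z]]$ and $\eta(\alpha_i,z)^-\in\mathfrak h\otimes\hbar\mathbb C[z^{-1}][[\hbar]]$ for all $i$ ($g^\pm$ = regular/singular part). $\eta'=\partial_z\eta$, $\eta''=\partial_z^2\eta$; $\langle\cdot,\cdot\rangle$ is extended $\mathbb C((z))[[\hbar]]$-bilinearly. $\Phi(h\otimes f(z),\varphi)=\mathrm{Res}_{z_1}\varphi(h,z_1)f(z-z_1)$ ($f(z-z_1)$ expanded in nonnegative powers of $z_1$), extended linearly; the map $\varphi$ in the claim exists uniquely. Convention: a function of $z_1-z_2$ is expanded in nonnegative powers of $z_2$, one of $z_2-z_1$ in nonnegative powers of $z_1$; $\iota_{z_1,z_2}$ denotes expansion in nonnegative powers of $z_2$. The category $\mathcal A_\hbar^\eta(Q)$: objects are topologically free $\mathbb C[[\hbar]]$-modules $W$ with fields $\alpha_{i,\hbar}(z),e^\pm_{i,\hbar}(z)\in\mathcal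 E_\hbar(W)$ ($i\in I$) such that for all $i,j\in I$: (AQ1) $[\alpha_{i,\hbar}(z_1),\alpha_{j,\hbar}(z_2)]=\langle\alpha_i,\alpha_j\rangle\frac{\partial}{\partial z_2}z_1^{-1}\delta(\frac{z_2}{z_1})-\langle\eta''(\alpha_i,z_1-z_2),\alpha_j\rangle+\langle\eta''(\alpha_j,z_2-z_1),\alpha_i\rangle$; (AQ2) $[\alpha_{i,\hbar}(z_1),e^\pm_{j,\hbar}(z_2)]=\pm\langle\alpha_i,\alpha_j\rangle e^\pm_{j,\hbar}(z_2)z_1^{-1}\delta(\frac{z_2}{z_1})\pm\langle\eta'(\alpha_i,z_1-z_2),\alpha_j\rangle e^\pm_{j,\hbar}(z_2)\pm\langle\eta'(\alpha_j,z_2-z_1),\alpha_i\rangle e^\pm_{j,\hbar}(z_2)$; (AQ3) there is $P_{ij}(z)\in\mathbb C((z))[[\hbar]]$ with $\iota_{z_1,z_2}e^{-\langle\eta(\alpha_i,z_1-z_2),\alpha_j\rangle}P_{ij}(z_1-z_2)e^\pm_{i,\hbar}(z_1)e^\pm_{j,\hbar}(z_2)=\iota_{z_2,z_1}e^{-\langle\eta(\alpha_j,z_2-z_1),\alpha_i\rangle}P_{ij}(z_1-z_2)e^\pm_{j,\hbar}(z_2)e^\pm_{i,\hbar}(z_1)$; (AQ4) there is $Q_{ij}(z)\in\mathbb C((z))[[\hbar]]$ with $\iota_{z_1,z_2}e^{\langle\eta(\alpha_i,z_1-z_2),\alpha_j\rangle}Q_{ij}(z_1-z_2)e^\pm_{i,\hbar}(z_1)e^\mp_{j,\hbar}(z_2)=\iota_{z_2,z_1}e^{\langle\eta(\alpha_j,z_2-z_1),\alpha_i\rangle}Q_{ij}(z_1-z_2)e^\mp_{j,\hbar}(z_2)e^\pm_{i,\hbar}(z_1)$;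 (AQ5) $\frac{d}{dz}e^\pm_{i,\hbar}(z)=\pm\alpha_{i,\hbar}(z)^+e^\pm_{i,\hbar}(z)\pm e^\pm_{i,\hbar}(z)\alpha_{i,\hbar}(z)^--\langle\eta'(\alpha_i,0)^+,\alpha_i\rangle e^\pm_{i,\hbar}(z)$, where $\eta'(\alpha_i,0)^+$ is the regular part evaluated at $z=0$; (AQ6) $\iota_{z_1,z_2}e^{\langle\eta(\alpha_i,z_1-z_2),\alpha_i\rangle}(z_1-z_2)^{\langle\alpha_i,\alpha_i\rangle}e^+_{i,\hbar}(z_1)e^-_{i,\hbar}(z_2)=\iota_{z_2,z_1}e^{\langle\eta(\alpha_i,z_2-z_1),\alpha_i\rangle}(z_1-z_2)^{\langle\alpha_i,\alpha_i\rangle}e^-_{i,\hbar}(z_2)e^+_{i,\hbar}(z_1)$, and $\big(e^{\langle\eta(\alpha_i,z_1-z_2),\alpha_i\rangle}(z_1-z_2)^{\langle\alpha_i,\alpha_i\rangle}e^+_{i,\hbar}(z_1)e^-_{i,\hbar}(z_2)\big)|_{z_1=z_2}=1$. Morphisms are $\mathbb C[[\hbar]]$-linear maps commuting with all the fields. *)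

From HB Require Import structures.
From mathcomp Require Export all_boot all_order all_algebra.
From mathcomp Require Export complex.
From mathcomp Require Export classical_sets fsbigop Rstruct.
Set Implicit Arguments. Unset Strict Implicit. Unset Printing Implicit Defensive.
Import Order.TTheory GRing.Theory Num.Theory.
Local Open Scope ring_scope.

Definition C : Type := (Rdefinitions.R)[i].

(* Sum over Z of a finitely supported family (0 if the support is infinite;
   all sums below are used only on finitely supported families). *)
Definition zsum {V : nmodType} (f : int -> V) : V :=
  (\sum_(n \in [set: int]) f n)%classic.
Definition zsum2 {V : nmodType} (f : int * int -> V) : V :=
  (\sum_(x \in [set: int * int]) f x)%classic.
Definition nsum {V : nmodType} (f : nat -> V) : V :=
  (\sum_(n \in [set: nat]) f n)%classic.

(* sc1   = series  sum_{p in N, r in Z} c p r hbar^p z^r       (C((z))[[hbar]])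
   sc2   = series  sum_{p, m, n} c p m n hbar^p z1^m z2^n     *)
Definition sc1 := nat -> int -> C.
Definition sc2 := nat -> int -> int -> C.

(* f is in C((z))[[hbar]] : for each hbar-order, a Laurent series *)
Definition laurent1 (f : sc1) : Prop :=
  forall p, exists N : int, forall r, r < N -> f p r = 0.

Definition sone : sc1 := fun p r => if (p == 0%N) && (r == 0) then 1 else 0.
Definition smul (f g : sc1) : sc1 := fun p r =>
  \sum_(q < p.+1) zsum (fun s => f q s * g (p - q)%N (r - s)).
Definition sopp (f : sc1) : sc1 := fun p r => - f p r.
Definition spow (f : sc1) (n : nat) : sc1 := iter n (smul f) sone.
Definition sexp (f : sc1) : sc1 := fun p r =>
  nsum (fun n => spow f n p r / (n`!)%:R).
Definition zpow (a : int) : sc1 := fun p r => if (p == 0%N) && (r == a) then 1 else 0.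
Definition dz (f : sc1) : sc1 := fun p r => (r + 1)%:~R * f p (r + 1).
Definition negz (f : sc1) : sc1 := fun p r => (-1) ^+ `|r|%N * f p r.

Definition gbinom (r : int) (n : nat) : C :=
  (\prod_(i < n) (r - (i : nat)%:Z)%:~R) / (n`!)%:R.

(* f(z1 - z2) expanded in nonnegative powers of z2  (= iota_{z1,z2}) *)
Definition iota12 (f : sc1) : sc2 := fun p m n =>
  if 0 <= n then f p (m + n) * gbinom (m + n) `|n|%N * (-1) ^+ `|n|%N else 0.
(* f(z2 - z1) expanded in nonnegative powers of z1  (= iota_{z2,z1}) *)
Definition iota21 (f : sc1) : sc2 := fun p m n =>
  if 0 <= m then f p (m + n) * gbinom (m + n) `|m|%N * (-1) ^+ `|m|%N else 0.

(* z1^{-1} delta(z2/z1) = sum_n z1^{-n-1} z2^n *)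
Definition delta2 : sc2 := fun p m n =>
  if (p == 0%N) && (m == - n - 1) then 1 else 0.
(* d/dz2 (z1^{-1} delta(z2/z1)) = sum_n n z1^{-n-1} z2^{n-1} *)
Definition ddelta2 : sc2 := fun p m n =>
  if (p == 0%N) && (m == - n - 2) then (n + 1)%:~R else 0.

(* Q = (+)_{i in I} Z alpha_i with Gram matrix A i j = <alpha_i, alpha_j>. *)
Definition sym_gram (I : finType) (A : I -> I -> int) : Prop :=
  forall i j, A i j = A j i.
Definition gram_even (I : finType) (A : I -> I -> int) : Prop :=
  forall c : I -> int, (2 %| \sum_i \sum_j c i * A i j * c j)%Z.
Definition gram_nondeg (I : finType) (A : I -> I -> int) : Prop :=
  forall c : I -> int, (forall j, \sum_i c i * A i j = 0) -> forall i, c i = 0.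

(* Elements of h = C (x) Q are coordinate vectors v : I -> C (v = sum v_k alpha_k).
   <v, alpha_j> : *)
Definition pair_al (I : finType) (A : I -> I -> int) (v : I -> C) (j : I) : C :=
  \sum_k v k * (A k j)%:~R.

(* A linear map eta : h -> h (x) C((z))[[hbar]] is given by its values on the
   basis:  eta(alpha_i, z) = sum_{p,r} hbar^p z^r (sum_k eta i p r k alpha_k). *)
Definition in_HQ (I : finType) (eta : I -> nat -> int -> I -> C) : Prop :=
  forall i,
    (forall p, exists N : int, forall r, r < N -> eta i p r = (fun=> 0)) /\
    (* eta(alpha_i,z)|_{hbar=0} in h (x) z C[[z]] *)
    (forall r, r <= 0 -> eta i 0%N r = (fun=> 0)) /\
    (* eta(alpha_i,z)^- in h (x) hbar C[z^-1][[hbar]] *)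
    (forall r, r < 0 -> eta i 0%N r = (fun=> 0)).

(* <eta(alpha_i, z), alpha_j> in C((z))[[hbar]] *)
Definition etaij (I : finType) (A : I -> I -> int) (eta : I -> nat -> int -> I -> C)
  (i j : I) : sc1 := fun p r => pair_al A (eta i p r) j.
Definition etak (I : finType) (eta : I -> nat -> int -> I -> C) (i k : I) : sc1 :=
  fun p r => eta i p r k.

Section Fields.
Variable W0 : lmodType C.

(* W = W0[[hbar]] : w = sum_k w k hbar^k *)
Definition hW := nat -> W0.
(* field a(z) : W -> W0((z))[[hbar]],  (a w) k n = coefficient of hbar^k z^n *)
Definition fieldT := hW -> nat -> int -> W0.
(* two-variable operator W -> W0[[z1^{+-1}, z2^{+-1}]][[hbar]] *)
Definition op2 := hW -> nat -> int -> int -> W0.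

Definition hact (c : nat -> C) (w : hW) : hW := fun k =>
  \sum_(p < k.+1) c p *: w (k - p)%N.
Definition hact1 (c : nat -> C) (x : nat -> int -> W0) : nat -> int -> W0 :=
  fun k n => \sum_(p < k.+1) c p *: x (k - p)%N n.

(* a is an element of E_hbar(W) = Hom_{C[[hbar]]}(W, W0((z))[[hbar]]) *)
Definition is_field (a : fieldT) : Prop :=
  (forall u v k n, a (fun t => u t + v t) k n = a u k n + a v k n) /\
  (forall c u k n, a (hact c u) k n = hact1 c (a u) k n) /\
  (forall w k, exists N : int, forall n, n < N -> a w k n = 0).

Definition fid : fieldT := fun w k n => if n == 0 then w k else 0.

(* a(z1) b(z2) *)
Definition fprod (a b : fieldT) : op2 := fun w K m n => a (fun k => b w k n) K m.
(* b(z2) a(z1) *)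
Definition fprod_rev (a b : fieldT) : op2 := fun w K m n => b (fun k => a w k m) K n.
Definition fcomm (a b : fieldT) : op2 := fun w K m n =>
  fprod a b w K m n - fprod_rev a b w K m n.

(* s(z1,z2) * 1 *)
Definition sc2id (s : sc2) : op2 := fun w K m n =>
  \sum_(p < K.+1) s p m n *: w (K - p)%N.
(* s(z1,z2) * b(z2) *)
Definition sc2f2 (s : sc2) (b : fieldT) : op2 := fun w K m n =>
  \sum_(p < K.+1) zsum (fun n' => s p m (n - n') *: b w (K - p)%N n').
(* s(z1,z2) * a(z1) b(z2) *)
Definition sc2ff (s : sc2) (a b : fieldT) : op2 := fun w K m n =>
  \sum_(p < K.+1) zsum2 (fun x => s p x.1 x.2 *: fprod a b w (K - p)%N (m - x.1) (n - x.2)).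
(* s(z1,z2) * b(z2) a(z1) *)
Definition sc2ff_rev (s : sc2) (a b : fieldT) : op2 := fun w K m n =>
  \sum_(p < K.+1) zsum2 (fun x => s p x.1 x.2 *: fprod_rev a b w (K - p)%N (m - x.1) (n - x.2)).
(* restriction z1 = z2 = z *)
Definition diag2 (X : op2) : fieldT := fun w K n => zsum (fun m => X w K m (n - m)).

Definition fprod1 (a b : fieldT) : fieldT := fun w K n =>
  zsum (fun n' => a (fun k => b w k n') K (n - n')).
Definition fplus (a : fieldT) : fieldT := fun w k n => if 0 <= n then a w k n else 0.
Definition fminus (a : fieldT) : fieldT := fun w k n => if n < 0 then a w k n else 0.
Definition fder (a : fieldT) : fieldT := fun w k n => (n + 1)%:~R *: a w k (n + 1).

(* Phi(alpha_k (x) g(z), phi) = Res_{z1} phi(alpha_k, z1) g(z - z1) *)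
Definition PhiT (g : sc1) (a : fieldT) : fieldT := fun w K n =>
  \sum_(s < K.+1) zsum (fun t => iota12 g s n (- t - 1) *: a w (K - s)%N t).

End Fields.

Definition sgn (b : bool) : C := if b then 1 else -1.

(* e true i = e^+_{i,hbar},  e false i = e^-_{i,hbar}. *)
Definition is_object (I : finType) (A : I -> I -> int)
  (eta : I -> nat -> int -> I -> C) (W0 : lmodType C)
  (alpha : I -> fieldT W0) (e : bool -> I -> fieldT W0) : Prop :=
  (forall i, is_field (alpha i)) /\
  (forall b i, is_field (e b i)) /\
  (forall i j, fcomm (alpha i) (alpha j) =
     sc2id (fun p m n => (A i j)%:~R * ddelta2 p m n
                         - iota12 (dz (dz (etaij A eta i j))) p m n
                         + iota21 (dz (dz (etaij A eta j i))) p m n)) /\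
  (forall b i j, fcomm (alpha i) (e b j) =
     sc2f2 (fun p m n => sgn b * ((A i j)%:~R * delta2 p m n
                         + iota12 (dz (etaij A eta i j)) p m n
                         + iota21 (dz (etaij A eta j i)) p m n)) (e b j)) /\
  (forall i j, exists P : sc1, laurent1 P /\ forall b,
     sc2ff (iota12 (smul (sexp (sopp (etaij A eta i j))) P)) (e b i) (e b j) =
     sc2ff_rev (iota21 (smul (sexp (sopp (etaij A eta j i))) (negz P))) (e b i) (e b j)) /\
  (forall i j, exists Q : sc1, laurent1 Q /\ forall b,
     sc2ff (iota12 (smul (sexp (etaij A eta i j)) Q)) (e b i) (e (~~ b) j) =
     sc2ff_rev (iota21 (smul (sexp (etaij A eta j i)) (negz Q))) (e b i) (e (~~ b) j)) /\
  (forall b i w k n, fder (e b i) w k n =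
     sgn b *: fprod1 (fplus (alpha i)) (e b i) w k n
     + sgn b *: fprod1 (e b i) (fminus (alpha i)) w k n
     - hact1 (fun p => dz (etaij A eta i i) p 0) (e b i w) k n) /\
  (forall i,
     sc2ff (iota12 (smul (sexp (etaij A eta i i)) (zpow (A i i)))) (e true i) (e false i) =
     sc2ff_rev (iota21 (smul (sexp (etaij A eta i i)) (negz (zpow (A i i)))))
               (e true i) (e false i) /\
     diag2 (sc2ff (iota12 (smul (sexp (etaij A eta i i)) (zpow (A i i))))
                  (e true i) (e false i)) = @fid W0).

From mathcomp Require Import zify ring.
Import Order.TTheory GRing.Theory Num.Theory.

Set Implicit Arguments.
Unset Strict Implicit.
Unset Printing Implicit Defensive.

Local Open Scope ring_scope.

(* Write eta'(alpha_i, z) = sum_k G_ik(z) alpha_k.  Substituting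
   alpha = phi + Phi(eta', phi) into a commutator gives
   [alpha_i(z1), f(z2)] = [phi_i(z1), f(z2)] + sum_k Phi_z1(G_ik)[phi_k(z1), f(z2)],
   and similarly in the second variable.  In hbar-degree 0, G_ik has only
   nonnegative powers of z, so Phi_z1(G_ik) only reads negative powers of z1
   and only produces nonnegative ones; by induction on the hbar-degree the
   operator X |-> X + Phi_z1(G)X is therefore injective.  Hence it suffices to
   check that the claimed right-hand sides satisfy the relations (AQ1), (AQ2):
   Phi applied to a delta function produces exactly the iota_{z1,z2}-terms of
   eta, while Phi kills the iota_{z2,z1}-terms, which contain no negative power
   of z1.  The third formula is obtained in the same way, in the variable z2,
   from the first one.  Only (AQ1), (AQ2) and the conditions defining H_Q are
   used. *)

Definition vanish_outside {V : nmodType} (f : int -> V) (N M : int) :=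
  forall t, t < N \/ M <= t -> f t = 0.

Definition laurent {V : nmodType} (x : int -> V) :=
  exists N : int, forall t, t < N -> x t = 0.

Section ZSum.
Variable V : nmodType.
Implicit Types f g : int -> V.

Lemma zsum_window f N M : vanish_outside f N M ->
  zsum f = \sum_(k < `|M - N|) f (N + k%:Z).
Proof.
move=> hf; rewrite /zsum (fsbigE [seq N + k%:Z | k <- iota 0 `|M - N|]) //=.
- rewrite big_map big_mkcond -(big_mkord xpredT (fun k => f (N + k%:Z))).
  by rewrite /index_iota subn0; apply: eq_bigr => k _; rewrite in_setT.
- by rewrite map_inj_uniq ?iota_uniq // => a b /= /addrI [].
- move=> t _; apply: contraNeq => ft0.
  have [leNt ltMt] : N <= t /\ t < M.
    by split; apply/negP => h; case/eqP: ft0; apply: hf; [left|right]; lia.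
  by apply/mapP; exists `|t - N|%N; [rewrite mem_iota|]; lia.
Qed.

Lemma vanish_outside_widen f N M N' M' :
  N' <= N -> M <= M' -> vanish_outside f N M -> vanish_outside f N' M'.
Proof. by move=> leN leM hf t [h|h]; apply: hf; [left|right]; lia. Qed.

Lemma eq_zsum f g : f =1 g -> zsum f = zsum g.
Proof. by move=> /boolp.funext ->. Qed.

Lemma zsum_eq0 f : (forall t, f t = 0) -> zsum f = 0.
Proof. by move=> f0; rewrite (@zsum_window f 0 0) ?big_ord0. Qed.

Lemma zsum_single f t0 : (forall t, t != t0 -> f t = 0) -> zsum f = f t0.
Proof.
move=> ft0; rewrite (@zsum_window f t0 (t0 + 1)).
  have -> : `|(t0 + 1 - t0)%R|%N = 1%N by lia.
  by rewrite big_ord1 addr0.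
by move=> t ht; apply: ft0; apply/eqP; lia.
Qed.

Lemma zsumD f g N M : vanish_outside f N M -> vanish_outside g N M ->
  zsum (fun t => f t + g t) = zsum f + zsum g.
Proof.
move=> hf hg; rewrite (zsum_window hf) (zsum_window hg) (@zsum_window _ N M) ?big_split //.
by move=> t ht; rewrite hf ?hg ?addr0.
Qed.

Lemma exchange_zsum_big (J : Type) (r : seq J) (F : J -> int -> V) N M :
  (forall k, vanish_outside (F k) N M) ->
  zsum (fun t => \sum_(k <- r) F k t) = \sum_(k <- r) zsum (F k).
Proof.
move=> hF; rewrite (@zsum_window _ N M).
  by rewrite exchange_big; apply: eq_bigr => k _; rewrite (zsum_window (hF k)).
by move=> t ht; rewrite big1 // => k _; apply: hF.
Qed.

Lemma zsum_shift f c N M : vanish_outside f N M ->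
  zsum (fun t => f (t + c)) = zsum f.
Proof.
move=> hf; rewrite (zsum_window hf) (@zsum_window _ (N - c) (M - c)).
  have -> : `|(M - c - (N - c))%R|%N = `|(M - N)%R|%N by lia.
  by apply: eq_bigr => k _; rewrite addrAC subrK.
by move=> t [ht|ht]; apply: hf; [left|right]; lia.
Qed.

End ZSum.

Lemma zsumB {V : zmodType} (f g : int -> V) N M :
  vanish_outside f N M -> vanish_outside g N M ->
  zsum (fun t => f t - g t) = zsum f - zsum g.
Proof.
move=> hf hg; rewrite (zsum_window hf) (zsum_window hg) (@zsum_window _ _ N M) ?sumrB //.
by move=> t ht; rewrite hf ?hg ?subr0.
Qed.

Lemma laurent_uniform {V : nmodType} (y : nat -> int -> V) :
  (forall k, laurent (y k)) ->
  forall K, exists N : int, forall k t, (k <= K)%N -> t < N -> y k t = 0.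
Proof.
move=> hy; elim=> [|K [N hN]].
  have [N hN] := hy 0%N; exists N => k t; rewrite leqn0 => /eqP ->; exact: hN.
have [N' hN'] := hy K.+1; exists (Order.min N N') => k t.
by rewrite leq_eqVlt ltnS lt_min => /orP[/eqP -> | hk] /andP[ht ht']; [apply: hN' | apply: hN].
Qed.

Lemma op2_ext {W0 : lmodType C} (X Y : op2 W0) :
  (forall w K m n, X w K m n = Y w K m n) -> X = Y.
Proof.
move=> eqXY; apply/boolp.funext => w; apply/boolp.funext => K.
by apply/boolp.funext => m; apply/boolp.funext => n.
Qed.

Section Fields.
Variable W0 : lmodType C.

Lemma zsum_scalerB (c : int -> C) (a b : int -> W0) :
  (forall t, 0 <= t -> c t = 0) -> laurent a -> laurent b ->
  zsum (fun t => c t *: (a t - b t)) =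
  zsum (fun t => c t *: a t) - zsum (fun t => c t *: b t).
Proof.
move=> c0 [Na ha] [Nb hb]; pose N := Order.min Na Nb.
rewrite -(@zsumB _ _ _ N 0); first by apply: eq_zsum => t; rewrite scalerBr.
- move=> t [ht|ht]; last by rewrite c0 // scale0r.
  by rewrite ha ?scaler0 //; move: ht; rewrite lt_min => /andP[].
- move=> t [ht|ht]; last by rewrite c0 // scale0r.
  by rewrite hb ?scaler0 //; move: ht; rewrite lt_min => /andP[].
Qed.

Variable f : fieldT W0.
Hypothesis hf : is_field f.

Lemma fieldD u v K n : f (fun t => u t + v t) K n = f u K n + f v K n.
Proof. by case: hf. Qed.

Lemma field_hact c u K n : f (hact c u) K n = hact1 c (f u) K n.
Proof. by case: hf => _ []. Qed.

Lemma field_laurent w K : laurent (f w K).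
Proof. by case: hf => _ [_ /(_ w K)]. Qed.

Lemma field0 K n : f (fun _ => 0) K n = 0.
Proof.
have := fieldD (fun _ => 0) (fun _ => 0) K n.
have -> : (fun _ : nat => (0 : W0) + 0) = (fun _ => 0).
  by apply/boolp.funext => t; rewrite addr0.
by move=> h; apply: (@addrI _ (f (fun=> 0) K n)); rewrite -h addr0.
Qed.

(* u - v is hbar^(K+1) times another input, and f is C[[hbar]]-linear. *)
Lemma field_trunc u v K n :
  (forall k, (k <= K)%N -> u k = v k) -> f u K n = f v K n.
Proof.
move=> huv; pose d k := u k - v k.
have -> : u = (fun t => v t + d t) by apply/boolp.funext => t; rewrite /d addrC subrK.
rewrite fieldD; pose c (p : nat) : C := if p == K.+1 then 1 else 0.
pose d' k := d (k + K.+1)%N.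
have -> : d = hact c d'.
  apply/boolp.funext => k; rewrite /hact; case: (leqP k K) => hk.
    rewrite big1 ?/d ?huv ?subrr // => p _; rewrite /c.
    suff /negbTE -> : val p != K.+1 by rewrite scale0r.
    by rewrite neq_ltn ltnS (leq_trans (leq_ord p) hk).
  rewrite (bigD1 (Ordinal (hk : K.+1 < k.+1)%N)) //= big1 ?addr0.
    by rewrite /c eqxx scale1r /d' subnK.
  move=> p /eqP hpK; rewrite /c; case: eqP => [eqp|_]; last by rewrite scale0r.
  by case: hpK; apply: val_inj.
rewrite field_hact /hact1 big1 ?addr0 // => p _; rewrite /c.
by case: eqP => [eqp|_]; [move: (ltn_ord p); rewrite eqp ltnn | rewrite scale0r].
Qed.

Lemma field_sum (J : Type) (r : seq J) (F : J -> hW W0) K n :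
  f (fun k => \sum_(j <- r) F j k) K n = \sum_(j <- r) f (F j) K n.
Proof.
elim: r => [|x r IH].
  rewrite big_nil; transitivity (f (fun=> 0) K n); last exact: field0.
  by congr f; apply/boolp.funext => k; rewrite big_nil.
rewrite big_cons -IH -fieldD; congr f; apply/boolp.funext => k; by rewrite big_cons.
Qed.

Lemma field_laurent_param (y : nat -> int -> W0) K n :
  (forall k, laurent (y k)) -> laurent (fun t => f (fun k => y k t) K n).
Proof.
move=> hy; have [N hN] := laurent_uniform hy K.
by exists N => t ht; rewrite (@field_trunc _ (fun _ => 0)) ?field0 // => k hk; apply: hN.
Qed.

(* After truncation in hbar the inner sums over t become finite. *)
Lemma field_conv (c : nat -> int -> C) (y : nat -> int -> W0) K n :
  (forall s t, 0 <= t -> c s t = 0) -> (forall k, laurent (y k)) ->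
  f (fun k => \sum_(s < k.+1) zsum (fun t => c s t *: y (k - s)%N t)) K n =
  \sum_(s < K.+1) zsum (fun t => c s t *: f (fun k => y k t) (K - s)%N n).
Proof.
move=> c0 hy; have [N hN] := laurent_uniform hy K.
rewrite (@field_trunc _ (fun k => \sum_(j < `|0 - N|)
           hact (fun s => c s (N + j%:Z)) (fun k => y k (N + j%:Z)) k)).
  rewrite field_sum; under eq_bigr => j _ do rewrite field_hact /hact1.
  rewrite exchange_big; apply: eq_bigr => s _; rewrite (@zsum_window _ _ N 0) //.
  move=> t [ht|ht]; last by rewrite c0 // scale0r.
  rewrite (@field_trunc _ (fun _ => 0)) ?field0 ?scaler0 // => k hk.
  by apply: hN => //; apply: leq_trans hk (leq_subr _ _).
move=> k hk; rewrite exchange_big; apply: eq_bigr => s _.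
rewrite (@zsum_window _ _ N 0) // => t [ht|ht]; last by rewrite c0 // scale0r.
by rewrite hN ?scaler0 //; apply: leq_trans (leq_subr _ _) hk.
Qed.

End Fields.

Lemma gbinom_zero (r : int) (n : nat) : 0 <= r -> r < n%:Z -> gbinom r n = 0.
Proof.
move=> r0 ltrn; have hr : (`|r| < n)%N by lia.
rewrite /gbinom (bigD1 (Ordinal hr)) //=.
have -> : r - `|r|%N%:Z = 0 by lia.
by rewrite mul0r mul0r.
Qed.

Lemma gbinom_rec (r : int) (n : nat) :
  (n.+1)%:R * gbinom (r + 1) n.+1 = (r + 1)%:~R * gbinom r n.
Proof.
rewrite /gbinom big_ord_recl /=.
have -> : \prod_(i < n) ((r + 1 - (bump 0 i)%:Z)%:~R : C) = \prod_(i < n) (r - i%:Z)%:~R.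
  by apply: eq_bigr => i _; congr intmul; rewrite /bump /=; lia.
have -> : r + 1 - 0%:Z = r + 1 by lia.
have n1 : (n.+1)%:R != 0 :> C by rewrite pnatr_eq0.
have nfact : (n`!)%:R != 0 :> C by rewrite pnatr_eq0 -lt0n fact_gt0.
rewrite factS natrM invfM; field.
by rewrite nfact addrC natr1 n1.
Qed.

Lemma iota12_pos (g : sc1) s m (t : int) : 0 <= t -> iota12 g s m (- t - 1) = 0.
Proof. by move=> ht; rewrite /iota12 ifF //; apply/negbTE; rewrite -ltNge; lia. Qed.

Lemma iota21_neg (g : sc1) p (t n : int) : t < 0 -> iota21 g p t n = 0.
Proof. by move=> ht; rewrite /iota21 ifF //; apply/negbTE; rewrite -ltNge. Qed.

Lemma iota12_low (g : sc1) (m t : int) : (forall r, r < 0 -> g 0%N r = 0) ->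
  iota12 g 0 m (- t - 1) != 0 -> 0 <= m /\ t < 0.
Proof.
move=> g0; rewrite /iota12; case: ifP => h; last by rewrite eqxx.
case: (ltP (m + (- t - 1)) 0) => hr; first by rewrite g0 // !mul0r eqxx.
case: (ltP (m + (- t - 1)) (`|- t - 1|%N)%:Z) => hb.
  by rewrite gbinom_zero // mulr0 mul0r eqxx.
by move=> _; split; lia.
Qed.

(* Coefficientwise forms of d/dz2 g(z1 - z2) = - g'(z1 - z2) and
   d/dz1 g(z2 - z1) = - g'(z2 - z1). *)
Lemma iota12_dz (g : sc1) s m (n : int) :
  (n + 1)%:~R * iota12 g s m (n + 1) = - iota12 (dz g) s m n.
Proof.
rewrite /iota12; case: ifP => h1; case: ifP => h2; last first.
- by rewrite mulr0 oppr0.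
- by exfalso; lia.
- have -> : n + 1 = 0 by lia.
  by rewrite mul0r oppr0.
have [n' ->] : exists n' : nat, n = n'%:Z by exists `|n|%N; lia.
have -> : `|(n'%:Z + 1)%R|%N = n'.+1 by lia.
have -> : `|n'%:Z|%N = n' by lia.
have -> : m + (n'%:Z + 1) = m + n' + 1 by rewrite addrA.
have -> : (n'%:Z + 1)%:~R = (n'.+1)%:R :> C by rewrite -PoszD addn1.
rewrite /dz exprS.
transitivity (- (g s (m + n' + 1) * (-1) ^+ n' * ((n'.+1)%:R * gbinom (m + n' + 1) n'.+1))).
  by ring.
by rewrite gbinom_rec; ring.
Qed.

Lemma iota21_dz (g : sc1) s (m n : int) :
  (- m - 1)%:~R * iota12 g s n (m + 1) = iota21 (dz g) s m n.
Proof.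
rewrite /iota12 /iota21; case: ifP => h1; case: ifP => h2; last first.
- by rewrite mulr0.
- by exfalso; lia.
- have -> : - m - 1 = 0 by lia.
  by rewrite mul0r.
have [m' ->] : exists m' : nat, m = m'%:Z by exists `|m|%N; lia.
have -> : `|(m'%:Z + 1)%R|%N = m'.+1 by lia.
have -> : `|m'%:Z|%N = m' by lia.
have -> : n + (m'%:Z + 1) = m'%:Z + n + 1 by rewrite addrA (addrC n).
have -> : (- m'%:Z - 1)%:~R = - (m'.+1)%:R :> C by rewrite -opprD -PoszD addn1 mulrNz.
rewrite /dz exprS.
transitivity (g s (m'%:Z + n + 1) * (-1) ^+ m' * ((m'.+1)%:R * gbinom (m'%:Z + n + 1) m'.+1)).
  by ring.
by rewrite gbinom_rec; ring.
Qed.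

Section PhiOperators.
Variables (W0 : lmodType C) (I : finType) (G : I -> I -> sc1).

(* [PhiT] acting on the variable z1, resp. z2, of a two-variable operator. *)
Definition Phi1 (g : sc1) (X : op2 W0) : op2 W0 := fun w K m n =>
  \sum_(s < K.+1) zsum (fun t => iota12 g s m (- t - 1) *: X w (K - s)%N t n).
Definition Phi2 (g : sc1) (X : op2 W0) : op2 W0 := fun w K m n =>
  \sum_(s < K.+1) zsum (fun t => iota12 g s n (- t - 1) *: X w (K - s)%N m t).

Definition idPhi1 (X : I -> op2 W0) (i : I) : op2 W0 := fun w K m n =>
  X i w K m n + \sum_k Phi1 (G i k) (X k) w K m n.
Definition idPhi2 (X : I -> op2 W0) (i : I) : op2 W0 := fun w K m n =>
  X i w K m n + \sum_k Phi2 (G i k) (X k) w K m n.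

Section Injectivity.
Hypothesis G_regular0 : forall i k r, r < 0 -> G i k 0%N r = 0.

Lemma idPhi1_inj : injective idPhi1.
Proof.
move=> X Y eqXY.
suff eqK : forall w K i m n, X i w K m n = Y i w K m n.
  by apply/boolp.funext => i; apply: op2_ext => w K m n; apply: eqK.
move=> w K; elim/ltn_ind: K => K IH.
pose T0 (Z : I -> op2 W0) i k m n :=
  zsum (fun t => iota12 (G i k) 0 m (- t - 1) *: Z k w K t n).
pose Tpos (Z : I -> op2 W0) i m n := \sum_k \sum_(s < K)
  zsum (fun t => iota12 (G i k) s.+1 m (- t - 1) *: Z k w (K - s.+1)%N t n).
have split_deg0 (Z : I -> op2 W0) i m n :
    \sum_k Phi1 (G i k) (Z k) w K m n = \sum_k T0 Z i k m n + Tpos Z i m n.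
  by rewrite -big_split; apply: eq_bigr => k _; rewrite /Phi1 big_ord_recl subn0.
have Tpos_eq i m n : Tpos X i m n = Tpos Y i m n.
  apply: eq_bigr => k _; apply: eq_bigr => s _; apply: eq_zsum => t.
  by rewrite IH //; have := ltn_ord s; lia.
have eq_deg0 i m n :
    X i w K m n + \sum_k T0 X i k m n = Y i w K m n + \sum_k T0 Y i k m n.
  have := congr1 (fun F => F i w K m n) eqXY.
  by rewrite /idPhi1 !split_deg0 Tpos_eq !addrA => /addIr.
have T0_eq0 (Z : I -> op2 W0) i k m n : m < 0 -> T0 Z i k m n = 0.
  move=> mneg; apply: zsum_eq0 => t.
  have [/eqP -> | nz] := boolP (iota12 (G i k) 0 m (- t - 1) == 0); first by rewrite scale0r.
  by have [] := iota12_low (G_regular0 i k) nz; lia.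
have eq_neg i m n : m < 0 -> X i w K m n = Y i w K m n.
  move=> mneg; have := eq_deg0 i m n.
  by rewrite !big1 ?addr0 // => k _; apply: T0_eq0.
move=> i m n; have := eq_deg0 i m n.
suff -> : \sum_k T0 X i k m n = \sum_k T0 Y i k m n by move/addIr.
apply: eq_bigr => k _; apply: eq_zsum => t.
have [/eqP -> | nz] := boolP (iota12 (G i k) 0 m (- t - 1) == 0); first by rewrite !scale0r.
by have [_ t0] := iota12_low (G_regular0 i k) nz; rewrite eq_neg.
Qed.

Lemma idPhi2_inj : injective idPhi2.
Proof.
pose swap (X : I -> op2 W0) k : op2 W0 := fun w K m n => X k w K n m.
have swapK : involutive swap by [].
move=> X Y /(congr1 swap) eqXY; rewrite -[X]swapK -[Y]swapK.
by congr swap; apply: idPhi1_inj.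
Qed.

End Injectivity.

Section Expansion.
Variables phi alpha : I -> fieldT W0.
Hypothesis phi_field : forall k, is_field (phi k).
Hypothesis alpha_phi :
  forall i w K n, phi i w K n + \sum_k PhiT (G i k) (phi k) w K n = alpha i w K n.

Lemma field_alpha_expand f i w K n x : is_field f ->
  f (fun k => alpha i w k x) K n = f (fun k => phi i w k x) K n +
    \sum_k \sum_(s < K.+1) zsum (fun t => iota12 (G i k) s x (- t - 1) *:
                                     f (fun k' => phi k w k' t) (K - s)%N n).
Proof.
move=> hf; have -> : (fun k => alpha i w k x) =
    (fun k => phi i w k x + \sum_l PhiT (G i l) (phi l) w k x).
  by apply/boolp.funext => k; rewrite alpha_phi.
rewrite fieldD // field_sum //; congr (_ + _); apply: eq_bigr => k _.
apply: (field_conv hf (c := fun s t => iota12 (G i k) s x (- t - 1))).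
  by move=> s t; apply: iota12_pos.
by move=> k'; apply: field_laurent.
Qed.

Lemma fcomm_expand_l f i : is_field f ->
  fcomm (alpha i) f = idPhi1 (fun k => fcomm (phi k) f) i.
Proof.
move=> hf; apply: op2_ext => w K m n.
rewrite /idPhi1 /fcomm /fprod /fprod_rev -alpha_phi field_alpha_expand // /Phi1 /PhiT.
under [X in _ = _ + X]eq_bigr => k _.
  under eq_bigr => s _.
    rewrite zsum_scalerB; [over|exact: iota12_pos|exact: field_laurent|].
    by apply: field_laurent_param => // k'; apply: field_laurent.
  by rewrite sumrB; over.
by rewrite sumrB opprD addrACA.
Qed.

Lemma fcomm_expand_r i j :
  fcomm (phi i) (alpha j) = idPhi2 (fun k => fcomm (phi i) (phi k)) j.
Proof.
apply: op2_ext => w K m n.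
rewrite /idPhi2 /fcomm /fprod /fprod_rev -alpha_phi field_alpha_expand // /Phi2 /PhiT.
under [X in _ = _ + X]eq_bigr => k _.
  under eq_bigr => s _.
    rewrite zsum_scalerB; [over|exact: iota12_pos| |exact: field_laurent].
    by apply: field_laurent_param => // k'; apply: field_laurent.
  by rewrite sumrB; over.
by rewrite sumrB opprD addrACA.
Qed.

End Expansion.

Lemma Phi1_ddelta (g : sc1) (a : C) (H : sc2)
  (H_neg : forall p t n, t < 0 -> H p t n = 0) w K m n :
  Phi1 g (sc2id (fun p m n => a * ddelta2 p m n + H p m n)) w K m n =
  \sum_(s < K.+1) (iota12 g s m (n + 1) * (a * (n + 1)%:~R)) *: w (K - s)%N.
Proof.
rewrite /Phi1; apply: eq_bigr => s _; rewrite (@zsum_single _ _ (- n - 2)).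
  have -> : - (- n - 2) - 1 = n + 1 by lia.
  case: (ltP (n + 1) 0) => hn.
    by rewrite /iota12 ifF ?mul0r ?scale0r //; apply/negbTE; rewrite -ltNge.
  rewrite /sc2id big_ord_recl /= big1 ?addr0.
    by rewrite /ddelta2 eqxx /= H_neg ?addr0 ?subn0 ?scalerA ?eqxx //; lia.
  by move=> p _; rewrite /ddelta2 /= H_neg ?mulr0 ?addr0 ?scale0r //; lia.
move=> t ht; case: (ltP t 0) => t0; last by rewrite iota12_pos // scale0r.
rewrite /sc2id big1 ?scaler0 // => p _.
by rewrite /ddelta2 (negbTE ht) andbF mulr0 H_neg // addr0 scale0r.
Qed.

Lemma Phi1_delta (g : sc1) (c0 c : C) (H : sc2)
  (H_neg : forall p t n, t < 0 -> H p t n = 0) (e : fieldT W0) w K m n :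
  Phi1 g (sc2f2 (fun p m n => c0 * (c * delta2 p m n + H p m n)) e) w K m n =
  \sum_(s < K.+1) zsum (fun t =>
    (iota12 g s m (- t - 1) * (c0 * c)) *: e w (K - s)%N (t + n + 1)).
Proof.
rewrite /Phi1; apply: eq_bigr => s _; apply: eq_zsum => t.
case: (ltP t 0) => t0; last by rewrite iota12_pos // mul0r !scale0r.
rewrite /sc2f2 big_ord_recl /= big1 ?addr0.
  rewrite (@zsum_single _ _ (t + n + 1)).
    rewrite /delta2 /= H_neg // addr0.
    have -> : (t == - (n - (t + n + 1)) - 1) = true by apply/eqP; lia.
    by rewrite mulr1 subn0 scalerA.
  move=> x hx; rewrite /delta2 /= H_neg // addr0.
  have -> : (t == - (n - x) - 1) = false.
    by apply/negbTE; apply: contra hx => /eqP h; apply/eqP; lia.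
  by rewrite mulr0 mulr0 scale0r.
move=> p _; apply: zsum_eq0 => x.
by rewrite /delta2 /= H_neg // addr0 mulr0 mulr0 scale0r.
Qed.

Lemma Phi2_ddelta (g : sc1) (a : C) w K m n :
  Phi2 g (sc2id (fun p m n => a * ddelta2 p m n)) w K m n =
  \sum_(s < K.+1) (iota12 g s n (m + 1) * (a * (- m - 1)%:~R)) *: w (K - s)%N.
Proof.
rewrite /Phi2; apply: eq_bigr => s _; rewrite (@zsum_single _ _ (- m - 2)).
  have -> : - (- m - 2) - 1 = m + 1 by lia.
  rewrite /sc2id big_ord_recl /= big1 ?addr0.
    rewrite /ddelta2 eqxx /=.
    have -> : (m == - (- m - 2) - 2) = true by apply/eqP; lia.
    have -> : - m - 2 + 1 = - m - 1 by lia.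
    by rewrite subn0 scalerA.
  by move=> p _; rewrite /ddelta2 /= mulr0 scale0r.
move=> t ht; rewrite /sc2id big1 ?scaler0 // => p _; rewrite /ddelta2.
have -> : (m == - t - 2) = false.
  by apply/negbTE; apply: contra ht => /eqP h; apply/eqP; lia.
by rewrite andbF mulr0 scale0r.
Qed.

End PhiOperators.

Section Coefficients.
Variables (I : finType) (A : I -> I -> int) (eta : I -> nat -> int -> I -> C).

Definition deta (i k : I) : sc1 := dz (etak eta i k).

Definition coef_alpha_alpha i j : sc2 := fun p m n =>
  (A i j)%:~R * ddelta2 p m n - iota12 (dz (dz (etaij A eta i j))) p m n
  + iota21 (dz (dz (etaij A eta j i))) p m n.
Definition coef_alpha_e (sg : C) i j : sc2 := fun p m n =>
  sg * ((A i j)%:~R * delta2 p m n + iota12 (dz (etaij A eta i j)) p m n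
        + iota21 (dz (etaij A eta j i)) p m n).
Definition coef_phi_alpha i j : sc2 := fun p m n =>
  (A i j)%:~R * ddelta2 p m n + iota21 (dz (dz (etaij A eta j i))) p m n.
Definition coef_phi_e (sg : C) i j : sc2 := fun p m n =>
  sg * ((A i j)%:~R * delta2 p m n + iota21 (dz (etaij A eta j i)) p m n).
Definition coef_phi_phi i j : sc2 := fun p m n => (A i j)%:~R * ddelta2 p m n.

Lemma sum_iota12_deta i j s m (x : int) :
  \sum_k iota12 (deta i k) s m x * (A k j)%:~R = iota12 (dz (etaij A eta i j)) s m x.
Proof.
rewrite /iota12; case: ifP => _; last by rewrite big1 // => k _; rewrite mul0r.
rewrite /deta /dz /etaij /etak /pair_al mulr_sumr !mulr_suml.
by apply: eq_bigr => k _; ring.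
Qed.

Lemma idPhi1_coef_phi_alpha (W0 : lmodType C) i j :
  idPhi1 deta (fun k => @sc2id W0 (coef_phi_alpha k j)) i = sc2id (coef_alpha_alpha i j).
Proof.
apply: op2_ext => w K m n; rewrite /idPhi1 /coef_phi_alpha.
under eq_bigr => k _ do rewrite (Phi1_ddelta _ _ (iota21_neg _)).
rewrite exchange_big /= /sc2id -big_split /=; apply: eq_bigr => s _.
rewrite -scaler_suml -scalerDl; congr (_ *: _).
rewrite (eq_bigr (fun k => (n + 1)%:~R * (iota12 (deta i k) s m (n + 1) * (A k j)%:~R)));
  last by move=> k _; ring.
by rewrite -mulr_sumr sum_iota12_deta iota12_dz /coef_phi_alpha /coef_alpha_alpha; ring.
Qed.

Lemma idPhi2_coef_phi_phi (W0 : lmodType C) i j : sym_gram A ->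
  idPhi2 deta (fun k => @sc2id W0 (coef_phi_phi i k)) j = sc2id (coef_phi_alpha i j).
Proof.
move=> Asym; apply: op2_ext => w K m n; rewrite /idPhi2 /coef_phi_phi.
under eq_bigr => k _ do rewrite Phi2_ddelta.
rewrite exchange_big /= /sc2id -big_split /=; apply: eq_bigr => s _.
rewrite -scaler_suml -scalerDl; congr (_ *: _).
rewrite (eq_bigr (fun k => (- m - 1)%:~R * (iota12 (deta j k) s n (m + 1) * (A k i)%:~R)));
  last by move=> k _; rewrite Asym; ring.
by rewrite -mulr_sumr sum_iota12_deta iota21_dz.
Qed.

Section Regularity.
Hypothesis eta_HQ : in_HQ eta.

Lemma deta_regular0 i k r : r < 0 -> deta i k 0%N r = 0.
Proof.
move=> r0; have [_ [eta0 _]] := eta_HQ i.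
by rewrite /deta /dz /etak eta0 ?mulr0 //; lia.
Qed.

Lemma dz_etaij_laurent i j s : laurent (dz (etaij A eta i j) s).
Proof.
have [eta_low _] := eta_HQ i; have [L hL] := eta_low s.
exists (L - 1) => r hr.
rewrite /dz /etaij hL; last by lia.
by rewrite /pair_al big1 ?mulr0 // => k _; rewrite mul0r.
Qed.

(* The delta-function part of the Phi-term is matched with the iota12-term
   after shifting its summation variable by n + 1. *)
Lemma idPhi1_coef_phi_e (W0 : lmodType C) (e : fieldT W0) (sg : C) i j :
  is_field e ->
  idPhi1 deta (fun k => sc2f2 (coef_phi_e sg k j) e) i = sc2f2 (coef_alpha_e sg i j) e.
Proof.
move=> he; apply: op2_ext => w K m n; rewrite /idPhi1 /coef_phi_e.
under eq_bigr => k _ do rewrite (Phi1_delta _ _ _ (iota21_neg _)).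
rewrite exchange_big /= /sc2f2 -big_split /=; apply: eq_bigr => s _.
have [N hN] := field_laurent he w (K - s)%N.
have [L hL] := dz_etaij_laurent j i s.
rewrite -(@exchange_zsum_big _ _ _ _ (N - n - 1) 0); last first.
  move=> k t [ht|ht]; last by rewrite iota12_pos // mul0r scale0r.
  by rewrite hN ?scaler0 //; lia.
pose F x := (\sum_k iota12 (deta i k) s m (n - x) * (sg * (A k j)%:~R))
              *: e w (K - s)%N x.
rewrite [X in _ + X = _](@eq_zsum _ _ (fun t => F (t + (n + 1)))); last first.
  move=> t; rewrite /F scaler_suml; apply: eq_bigr => k _.
  have -> : n - (t + (n + 1)) = - t - 1 by lia.
  by rewrite addrA.
have F_vanish : vanish_outside F N (n + 1).
  move=> x [hx|hx]; first by rewrite /F hN ?scaler0.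
  rewrite /F big1 ?scale0r // => k _.
  by rewrite /iota12 ifF ?mul0r //; apply/negbTE; rewrite -ltNge; lia.
rewrite (zsum_shift _ F_vanish).
rewrite -(@zsumD _ _ _ N (n + `|m|%:Z + `|L|%:Z + 2)); first last.
- by apply: vanish_outside_widen F_vanish => //; lia.
- move=> x [hx|hx]; first by rewrite hN ?scaler0.
  have -> : delta2 s m (n - x) = 0.
    by rewrite /delta2 ifF //; apply/negbTE; rewrite negb_and; apply/orP; right; apply/eqP; lia.
  have -> : iota21 (dz (etaij A eta j i)) s m (n - x) = 0.
    by rewrite /iota21; case: ifP => hm //; rewrite hL ?mul0r //; lia.
  by rewrite mulr0 add0r mulr0 scale0r.
apply: eq_zsum => x; rewrite /F -scalerDl; congr (_ *: _).
rewrite (eq_bigr (fun k => sg * (iota12 (deta i k) s m (n - x) * (A k j)%:~R)));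
  last by move=> k _; ring.
by rewrite -mulr_sumr sum_iota12_deta /coef_phi_e /coef_alpha_e; ring.
Qed.

End Regularity.
End Coefficients.

Theorem lemma5p3 (I : finType) (A : I -> I -> int)
  (hsym : sym_gram A) (heven : gram_even A) (hnd : gram_nondeg A)
  (eta : I -> nat -> int -> I -> C) (heta : in_HQ eta)
  (W0 : lmodType C) (alpha : I -> fieldT W0) (e : bool -> I -> fieldT W0)
  (hobj : is_object A eta alpha e)
  (phi : I -> fieldT W0) (hphi_field : forall k, is_field (phi k))
  (hphi : forall i w K n,
     phi i w K n + \sum_k PhiT (dz (etak eta i k)) (phi k) w K n = alpha i w K n) :
  (forall i j, fcomm (phi i) (alpha j) =
     sc2id (fun p m n => (A i j)%:~R * ddelta2 p m n
                         + iota21 (dz (dz (etaij A eta j i))) p m n)) /\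
  (forall b i j, fcomm (phi i) (e b j) =
     sc2f2 (fun p m n => sgn b * ((A i j)%:~R * delta2 p m n
                         + iota21 (dz (etaij A eta j i)) p m n)) (e b j)) /\
  (forall i j, fcomm (phi i) (phi j) =
     sc2id (fun p m n => (A i j)%:~R * ddelta2 p m n)).
Proof.
case: hobj => alpha_field [e_field [AQ1 [AQ2 _]]].
have inj1 := idPhi1_inj (deta_regular0 heta).
have inj2 := idPhi2_inj (deta_regular0 heta).
have expand_l := fcomm_expand_l hphi_field hphi.
have phi_alpha j : (fun i => fcomm (phi i) (alpha j)) =
                   (fun i => sc2id (coef_phi_alpha A eta i j)).
  apply: inj1; apply/boolp.funext => i.
  by rewrite -(expand_l _ _ (alpha_field j)) AQ1 idPhi1_coef_phi_alpha.
have phi_e b j : (fun i => fcomm (phi i) (e b j)) =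
                 (fun i => sc2f2 (coef_phi_e A eta (sgn b) i j) (e b j)).
  apply: inj1; apply/boolp.funext => i.
  by rewrite -(expand_l _ _ (e_field b j)) AQ2 (idPhi1_coef_phi_e A heta _ _ _ (e_field b j)).
have phi_phi i : (fun j => fcomm (phi i) (phi j)) =
                 (fun j => sc2id (coef_phi_phi A i j)).
  apply: inj2; apply/boolp.funext => j.
  rewrite -(fcomm_expand_r hphi_field hphi) (idPhi2_coef_phi_phi _ _ _ _ hsym).
  exact: (congr1 (@^~ i) (phi_alpha j)).
split; [|split].
- by move=> i j; apply: (congr1 (@^~ i) (phi_alpha j)).
- by move=> b i j; apply: (congr1 (@^~ i) (phi_e b j)).
- by move=> i j; apply: (congr1 (@^~ j) (phi_phi i)).
Qed.
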